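(* Let $p$ be a prime, let $A$ be a commutative ring with $\mathbb{Q}\subseteq A$, and let $|_0$ be a $p$-archimedean $p$-divisibility on $A$. Then an element $|$ of $\mathrm{Spec}\,D_p(A,|_0)$ is maximal (under inclusion) if and only if $I(|)$ is prime and the corresponding $p$-valuation $\bar v$ on $F=\mathrm{Quot}(A/I(|))$ has value group $\mathbb{Z}$.
   Context: A divisibility on $A$ is a binary relation $|\subseteq A\times A$ such that for all $a,b,c$: (1) $a|a$; (2) $a|b,\ b|c\Rightarrow a|c$; (3) $a|b,\ a|c\Rightarrow a|b-c$; (4) $a|b\Rightarrow ac|bc$; (5) $0\nmid1$. A $p$-divisibility additionally satisfies for all $a,b$: (6) $0\nmid a\Rightarrow pa\nmid a$; (7) $p[(a^pb-b^pa)^2-(b^{p+1})^2]\ \big|\ (a^pb-b^pa)b^{p+1}$. It is $p$-archimedean if for all $a$ there is $m\in\mathbb{Z}$ with $p^m|a$. Support $I(|)=\{a;\ 0|a\}$; total: $a|b$ or $b|a$; cancellation: $0\nmid c,\ ac|bc\Rightarrow a|b$. $\mathrm{Spec}\,D_p(A,|_0)$ is the set of total $p$-divisibilities with cancellation containing $|_0$. A $p$-valuation on a field of characteristic $0$ is a valuation whose value group is discretely ordered with $v(p)$ minimal positive and whose residue field is $\mathbb{F}_p$. For $|\in\mathrm{Spec}\,D_p(A,|_0)$, the corresponding $p$-valuation $\bar v$ on $\mathrm{Quot}(A/I(|))$ is the unique (up to equivalence) $p$-valuation with $a|b\Leftrightarrow\bar v(a+I(|))\le\bar v(b+I(|))$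 for all $a,b\in A$. *)

From HB Require Import structures.
From mathcomp Require Import all_boot all_order all_algebra.
Set Implicit Arguments. Unset Strict Implicit. Unset Printing Implicit Defensive.
Import Order.TTheory GRing.Theory Num.Theory.
Local Open Scope ring_scope.

Section Divisibility.
Variable A : comUnitRingType.
Variable p : nat.

(* A binary relation on A, thought of as "a | b". *)
Definition divisibility (dv : A -> A -> Prop) : Prop :=
  [/\ (forall a, dv a a),
      (forall a b c, dv a b -> dv b c -> dv a c),
      (forall a b c, dv a b -> dv a c -> dv a (b - c)),
      (forall a b c, dv a b -> dv (a * c) (b * c))
    & ~ dv 0 1].

Definition p_divisibility (dv : A -> A -> Prop) : Prop :=
  [/\ divisibility dv,
      (forall a, ~ dv 0 a -> ~ dv (p%:R * a) a)
    & (forall a b,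
        dv (p%:R * ((a ^+ p * b - b ^+ p * a) ^+ 2 - (b ^+ p.+1) ^+ 2))
           ((a ^+ p * b - b ^+ p * a) * b ^+ p.+1))].

(* p-archimedean: every a is divisible by some integral power of p
   (negative powers make sense since Q is contained in A). *)
Definition p_archimedean (dv : A -> A -> Prop) : Prop :=
  forall a, exists m : int, dv ((p%:R : A) ^ m) a.

Definition div_support (dv : A -> A -> Prop) : A -> Prop := fun a => dv 0 a.

Definition total_rel (dv : A -> A -> Prop) : Prop :=
  forall a b, dv a b \/ dv b a.

Definition cancellation (dv : A -> A -> Prop) : Prop :=
  forall a b c, ~ dv 0 c -> dv (a * c) (b * c) -> dv a b.

Definition rel_sub (dv dv' : A -> A -> Prop) : Prop :=
  forall a b, dv a b -> dv' a b.

Definition in_SpecDp (dv0 dv : A -> A -> Prop) : Prop :=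
  [/\ p_divisibility dv, total_rel dv, cancellation dv & rel_sub dv0 dv].

Definition maximal_in_SpecDp (dv0 dv : A -> A -> Prop) : Prop :=
  in_SpecDp dv0 dv /\
  forall dv', in_SpecDp dv0 dv' -> rel_sub dv dv' -> rel_sub dv' dv.

Definition prime_ideal (I : A -> Prop) : Prop :=
  [/\ (I 0), (forall a b, I a -> I b -> I (a - b)),
      (forall a b, I a -> I (a * b)), ~ I 1
    & (forall a b, I (a * b) -> I a \/ I b)].

Definition is_quot_field_of_quotient (I : A -> Prop) (F : fieldType)
  (phi : {rmorphism A -> F}) : Prop :=
  (forall a, phi a = 0 <-> I a) /\
  (forall x : F, exists a b, phi b != 0 /\ x = phi a / phi b).

End Divisibility.

Definition ordered_abelian_group (G : zmodType) (le : G -> G -> Prop) : Prop :=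
  [/\ (forall x, le x x),
      (forall x y, le x y -> le y x -> x = y),
      (forall x y z, le x y -> le y z -> le x z),
      (forall x y, le x y \/ le y x)
    & (forall x y z, le x y -> le (x + z) (y + z))].

Definition gt_rel (G : zmodType) (le : G -> G -> Prop) (x y : G) : Prop :=
  le y x /\ x <> y.

(* A (Krull) valuation v : F^x -> G (values of v at 0 are irrelevant;
   v(0) = infinity by convention). *)
Definition valuation (F : fieldType) (G : zmodType) (le : G -> G -> Prop)
  (v : F -> G) : Prop :=
  (forall x y, x != 0 -> y != 0 -> v (x * y) = v x + v y) /\
  (forall x y, x != 0 -> y != 0 -> x + y != 0 ->
     le (v x) (v (x + y)) \/ le (v y) (v (x + y))).

(* A p-valuation on a field of characteristic 0: value group
   v(F^x) discretely ordered with v(p) minimal positive, residue field F_p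
   (i.e. every element of the valuation ring is congruent to an integer
   modulo the maximal ideal; since v(p) > 0 the residue field is then F_p). *)
Definition p_valuation (p : nat) (F : fieldType) (G : zmodType)
  (le : G -> G -> Prop) (v : F -> G) : Prop :=
  [/\ [pchar F] =i pred0,
      valuation le v,
      gt_rel le (v p%:R) 0,
      (forall x : F, x != 0 -> ~ (gt_rel le (v x) 0 /\ gt_rel le (v p%:R) (v x)))
    & (forall x : F, x != 0 -> le 0 (v x) ->
         exists n : nat, x - n%:R = 0 \/
                         (x - n%:R != 0 /\ gt_rel le (v (x - n%:R)) 0))].

(* extended order with v(0) = infinity:  v(x) <= v(y) *)
Definition vle (F : fieldType) (G : zmodType) (le : G -> G -> Prop)
  (v : F -> G) (x y : F) : Prop :=
  y = 0 \/ (x != 0 /\ le (v x) (v y)).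

Definition corresponds (A : comUnitRingType) (dv : A -> A -> Prop)
  (F : fieldType) (phi : {rmorphism A -> F}) (G : zmodType)
  (le : G -> G -> Prop) (v : F -> G) : Prop :=
  forall a b, dv a b <-> vle le v (phi a) (phi b).

Definition value_group_is_Z (F : fieldType) (G : zmodType)
  (le : G -> G -> Prop) (v : F -> G) : Prop :=
  exists f : int -> G,
    [/\ (forall m n, f (m + n) = f m + f n),
        (forall m n, le (f m) (f n) <-> (m <= n)%R),
        (forall x : F, x != 0 -> exists n, v x = f n)
      & (forall n, exists x : F, x != 0 /\ v x = f n)].

(* Write I for the support of |.  For a total p-divisibility with cancellation,
   axioms (6) and (7) say that 0 < v(p) is the least positive value and that the
   residue field is F_p (the Fermat polynomial X^p - X - prod_(i < p) (X - i) has
   coefficients divisible by p).  Hence an element a outside I is associated to p^n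
   as soon as p^n | a but not p^(n+1) | a, so the value group is Z exactly when no
   element outside I is divisible by every power of p.
   If | is maximal, such infinitely p-divisible elements lie in I: otherwise adding
   them to the support gives a strictly larger element of Spec D_p(A, |_0).
   Conversely, extend | to Quot(A / I) and take its value group: the result is a
   p-valuation, so by hypothesis its value group is Z, generated by v(p); then every
   a outside I is associated to a power of p, and a larger divisibility would make
   p^(n+1) divide p^n, i.e. p | 1. *)

From HB Require Import structures.
From mathcomp Require Import all_boot all_order all_algebra finfield.
From mathcomp Require Import generic_quotient ring zify.
From Stdlib Require Import Classical ClassicalEpsilon.
Import Order.TTheory GRing.Theory Num.Theory.
Local Open Scope ring_scope.
Set Implicit Arguments. Unset Strict Implicit. Unset Printing Implicit Defensive.

Section DivisibilityTheory.
Variables (R : comUnitRingType) (d : R -> R -> Prop).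
Hypothesis hd : divisibility d.

Lemma dv_refl a : d a a. Proof. by case: hd. Qed.
Lemma dv_trans a b c : d a b -> d b c -> d a c. Proof. by case: hd => _ h _ _ _; apply: h. Qed.
Lemma dv_sub a b c : d a b -> d a c -> d a (b - c). Proof. by case: hd => _ _ h _ _; apply: h. Qed.
Lemma dv_mulr a b c : d a b -> d (a * c) (b * c). Proof. by case: hd => _ _ _ h _; apply: h. Qed.
Lemma not_dv01 : ~ d 0 1. Proof. by case: hd. Qed.

Lemma dvr0 a : d a 0. Proof. by rewrite -(subrr a); apply: dv_sub; apply: dv_refl. Qed.
Lemma dv_opp a b : d a b -> d a (- b).
Proof. by move=> h; rewrite -sub0r; apply: dv_sub => //; apply: dvr0. Qed.
Lemma dvNr a b : d a (- b) <-> d a b. Proof. by split=> /dv_opp; rewrite ?opprK. Qed.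
Lemma dv_add a b c : d a b -> d a c -> d a (b + c).
Proof. by move=> h1 h2; rewrite -(opprK c); apply: dv_sub => //; apply: dv_opp. Qed.
Lemma dv_mull a b c : d a b -> d (c * a) (c * b).
Proof. by move=> h; rewrite ![c * _]mulrC; apply: dv_mulr. Qed.
Lemma dvNl a b : d (- a) b <-> d a b.
Proof.
suff dvN x y : d x y -> d (- x) y by split=> /dvN; rewrite ?opprK.
by move=> /(dv_mulr (-1)); rewrite !mulrN1 dvNr.
Qed.
Lemma dv_mul a b c e : d a b -> d c e -> d (a * c) (b * e).
Proof. by move=> h1 h2; apply: dv_trans (dv_mulr c h1) _; apply: dv_mull. Qed.
Lemma dv_support_mulr a b : d 0 a -> d 0 (a * b).
Proof. by move=> /(dv_mulr b); rewrite mul0r. Qed.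

Lemma dv1_nat n : d 1 n%:R.
Proof.
by elim: n => [|n IH]; [apply: dvr0 | rewrite -addn1 natrD; apply: dv_add => //; apply: dv_refl].
Qed.
Lemma dv1_int (z : int) : d 1 z%:~R.
Proof. by case: z => n; [apply: dv1_nat | rewrite NegzE mulrNz dvNr; apply: dv1_nat]. Qed.
Lemma dv1_exp y n : d 1 y -> d 1 (y ^+ n).
Proof.
by move=> h; elim: n => [|n IH]; [apply: dv_refl | rewrite exprS -[1]mulr1; apply: dv_mul].
Qed.

Hypothesis htot : total_rel d.

Lemma dv_addr_strict x y : ~ d y x -> d x (x + y) /\ d (x + y) x.
Proof.
move=> hyx; have hxy : d x y by case: (htot x y).
split; first by apply: dv_add => //; apply: dv_refl.
apply: NNPP => hn; case: (htot y (x + y)) => h.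
- by apply: hyx; rewrite -(addrK y x); apply: dv_sub => //; apply: dv_refl.
- by apply: hn; rewrite -{2}(addrK y x); apply: dv_sub => //; apply: dv_refl.
Qed.

Hypothesis hcan : cancellation d.

Lemma dv_cancell a b c : ~ d 0 c -> d (c * a) (c * b) -> d a b.
Proof. by move=> h; rewrite ![c * _]mulrC; apply: hcan. Qed.
Lemma dv_support_prime a b : d 0 (a * b) -> d 0 a \/ d 0 b.
Proof.
move=> h; case: (classic (d 0 b)) => hb; [by right | left].
by apply: (hcan hb); rewrite mul0r.
Qed.
Lemma not_dv_support_mul a b : ~ d 0 a -> ~ d 0 b -> ~ d 0 (a * b).
Proof. by move=> ha hb /dv_support_prime []. Qed.

End DivisibilityTheory.

Definition fermat_poly (p : nat) : {poly int} :=
  'X^p - 'X - \prod_(i < p) ('X - (i%:Z)%:P).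

Lemma fermat_poly_map (R : comNzRingType) p :
  map_poly intr (fermat_poly p) = 'X^p - 'X - \prod_(i < p) ('X - (i%:R)%:P) :> {poly R}.
Proof.
rewrite /fermat_poly !rmorphB /= map_polyXn map_polyX rmorph_prod /=; congr (_ - _).
by apply: eq_bigr => i _; rewrite rmorphB /= map_polyX map_polyC /= pmulrn.
Qed.

Lemma fermat_polyE (R : comNzRingType) p (y : R) :
  (map_poly intr (fermat_poly p)).[y] = y ^+ p - y - \prod_(i < p) (y - i%:R).
Proof.
rewrite fermat_poly_map !hornerE horner_prod; congr (_ - _).
by apply: eq_bigr => i _; rewrite !hornerE.
Qed.

Lemma fermat_poly_Fp p : prime p -> map_poly intr (fermat_poly p) = 0 :> {poly 'F_p}.
Proof.
move=> pp; rewrite fermat_poly_map; apply/eqP; rewrite subr_eq0.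
have := @finField_genPoly 'F_p; rewrite card_Fp // => ->; apply/eqP.
set G := fun i : nat => 'X - ((i%:R : 'F_p))%:P.
have widen n : n = p -> \prod_(0 <= i < n) G i = \prod_(0 <= i < p) G i by move=> ->.
rewrite -(big_mkord xpredT G) -(widen _ (Fp_cast pp)) big_mkord.
by apply: eq_bigr => i _; rewrite /G natr_Zp.
Qed.

Lemma fermat_poly_coef p i : prime p -> (p %| (fermat_poly p)`_i)%Z.
Proof.
move=> pp; rewrite (dvdz_pcharf (pchar_Fp pp)) -(coef_map (intr : int -> 'F_p)).
by rewrite fermat_poly_Fp ?coef0.
Qed.

Section PDivisibility.
Variables (R : comUnitRingType) (d : R -> R -> Prop) (p : nat).
Hypotheses (hd : divisibility d) (htot : total_rel d) (pp : prime p).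
Hypothesis p_ndv1 : ~ d p%:R 1.
Hypothesis dv_fermat : forall y, d (p%:R * ((y ^+ p - y) ^+ 2 - 1)) (y ^+ p - y).

Lemma fermat_ndv1 y : d 1 y -> ~ d (y ^+ p - y) 1.
Proof.
move=> h1y hw; apply: p_ndv1; apply: (dv_trans hd _ hw); apply: (dv_trans hd _ (dv_fermat y)).
have h1w : d 1 ((y ^+ p - y) ^+ 2 - 1).
  apply: (dv_sub hd _ (dv_refl hd 1)); apply: (dv1_exp hd).
  exact: (dv_sub hd (dv1_exp hd p h1y) h1y).
by have := dv_mull hd p%:R h1w; rewrite mulr1.
Qed.

(* Both y^p - y and the Fermat polynomial at y have positive value, hence so does
   their difference prod_(i < p) (y - i), and then one of its factors. *)
Lemma dv_residue y : d 1 y -> exists n : nat, ~ d (y - n%:R) 1.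
Proof.
move=> h1y; set Q := (map_poly intr (fermat_poly p)).[y].
have p_dvQ : d p%:R Q.
  rewrite /Q horner_coef; apply: big_ind; [exact: dvr0 | exact: dv_add |].
  move=> i _; rewrite coef_map /=; have /dvdzP [k ->] := fermat_poly_coef i pp.
  rewrite intrM -pmulrn mulrAC mulrC -[X in d X _]mulr1; apply: (dv_mull hd).
  rewrite -[X in d X _]mulr1.
  by apply: (dv_mul hd (dv1_int hd k) (dv1_exp hd i h1y)).
have Q_ndv1 : ~ d Q 1 by move=> h; apply: p_ndv1; apply: (dv_trans hd p_dvQ h).
have prod_ndv1 : ~ d (\prod_(i < p) (y - i%:R)) 1.
  have -> : \prod_(i < p) (y - i%:R) = (y ^+ p - y) - Q by rewrite /Q fermat_polyE; ring.
  move=> h; case: (htot (y ^+ p - y) Q) => hc.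
  - by apply: (fermat_ndv1 h1y); apply: (dv_trans hd _ h); apply: (dv_sub hd (dv_refl hd _) hc).
  - by apply: Q_ndv1; apply: (dv_trans hd _ h); apply: (dv_sub hd hc (dv_refl hd _)).
apply: NNPP => hn; apply: prod_ndv1; apply: (big_ind (fun x => d x 1)); first exact: dv_refl.
  by move=> a b ha hb; rewrite -[1]mulr1; apply: dv_mul.
by move=> i _; apply: NNPP => hi; apply: hn; exists i.
Qed.

Hypothesis hcan : cancellation d.

(* v(p) is the least positive value: if v(y) > 0 then v(y^p) > v(y), so
   w = y^p - y has v(w) = v(y), and the Fermat axiom p (w^2 - 1) | w gives p | y. *)
Lemma dv_discrete y : d 1 y -> ~ d y 1 -> d p%:R y.
Proof.
move=> h1y hy1; case: (classic (d 0 y)) => hy0; first exact: (dv_trans hd (dvr0 hd _) hy0).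
have hnyp : ~ d (y ^+ p) (- y).
  move=> /(dvNr hd) h; apply: hy1; apply: (dv_cancell hcan hy0); rewrite mulr1.
  apply: (dv_trans hd _ h).
  have := dv_mull hd (y * y) (dv1_exp hd (p - 2) h1y).
  by rewrite mulr1 -expr2 -exprD subnKC ?prime_gt1.
have [hyw hwy] := dv_addr_strict hd htot hnyp; rewrite addrC in hyw hwy.
have h1w2 : d 1 ((y ^+ p - y) ^+ 2 - 1).
  apply: (dv_sub hd _ (dv_refl hd 1)); apply: (dv1_exp hd).
  by apply: (dv_trans hd h1y); apply/(dvNl hd).
apply: (dv_trans hd _ ((dvNr hd _ _).1 hwy)); apply: (dv_trans hd _ (dv_fermat y)).
by have := dv_mull hd p%:R h1w2; rewrite mulr1.
Qed.

End PDivisibility.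

Definition asbool (P : Prop) : bool := if excluded_middle_informative P then true else false.

Lemma asboolP (P : Prop) : reflect P (asbool P).
Proof. by rewrite /asbool; case: excluded_middle_informative => h; constructor. Qed.

(* Classically every commutative ring is a unit ring; {fraction _} needs this
   structure on A / I. *)
Section ClassicalUnitRing.
Variable R : comNzRingType.

Definition cunit : pred R := fun x => asbool (exists y, y * x = 1).

Definition cinv (x : R) : R :=
  if cunit x then epsilon (inhabits x) (fun y => y * x = 1) else x.

Lemma cmulVr : {in cunit, left_inverse 1 cinv *%R}.
Proof. by move=> x ux; rewrite /cinv ifT //; apply: (epsilon_spec _ _ (asboolP _ ux)). Qed.

Lemma cunitPl x y : y * x = 1 -> cunit x.
Proof. by move=> h; apply/asboolP; exists y. Qed.

Lemma cinv_out : {in [predC cunit], cinv =1 id}.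
Proof. by move=> x; rewrite inE /cinv => /negbTE h; rewrite ifF. Qed.

End ClassicalUnitRing.

Lemma fraction_numden (R : idomainType) (x : {fraction R}) :
  exists n d : R, d != 0 /\ x = tofrac n / tofrac d.
Proof.
elim/quotW: x => r; exists (\n_r), (\d_r); split; first exact: denom_ratioP.
have hd : tofrac \d_r != 0 :> {fraction R} by rewrite tofrac_eq0 denom_ratioP.
apply: (mulIf hd); rewrite divfK // /tofrac; unlock.
rewrite -[_ * _]/(FracField.mul _ _) -FracField.pi_mul; apply/eqmodP.
by rewrite /= FracField.equivfE /FracField.mulf !numden_Ratio
  ?mulf_neq0 ?oner_neq0 ?denom_ratioP // !mulr1 mulrC.
Qed.

Section QuotientField.
Variables (A : comUnitRingType) (I : A -> Prop).
Hypothesis hI : prime_ideal I.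

Definition ideal_pred : pred A := fun a => asbool (I a).

Lemma ideal_pred_closed : idealr_closed ideal_pred.
Proof.
case: hI => I0 Isub Imul I1 _; split; [exact/asboolP | by apply/asboolP |].
move=> a u v /asboolP hu /asboolP hv; apply/asboolP.
have -> : a * u + v = v - (0 - u * a) by rewrite sub0r opprK addrC mulrC.
exact: Isub _ _ hv (Isub _ _ I0 (Imul _ a hu)).
Qed.
HB.instance Definition _ := isIdealr.Build A ideal_pred ideal_pred_closed.

Lemma ideal_pred_prime : prime_idealr_closed ideal_pred.
Proof.
case: hI => _ _ _ _ Iprime u v /asboolP /Iprime.
by case=> h; apply/orP; [left | right]; apply/asboolP.
Qed.
HB.instance Definition _ := isPrimeIdealrClosed.Build A ideal_pred ideal_pred_prime.

Definition quotient_ring := {ideal_quot (ideal_pred : prime_idealr A)}.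
HB.instance Definition _ := GRing.ComNzRing.on quotient_ring.
HB.instance Definition _ := GRing.ComNzRing_hasMulInverse.Build quotient_ring
  (@cmulVr quotient_ring) (@cunitPl quotient_ring) (@cinv_out quotient_ring).
HB.instance Definition _ := GRing.ComUnitRing_isIntegral.Build quotient_ring
  (@Quotient.rquot_IdomainAxiom A (ideal_pred : prime_idealr A)).

Local Open Scope quotient_scope.

Definition quotient_proj : {rmorphism A -> quotient_ring} :=
  \pi_{ideal_quot (ideal_pred : prime_idealr A)}.
Definition quot_field_map : {rmorphism A -> {fraction quotient_ring}} :=
  (@tofrac quotient_ring \o quotient_proj)%FUN.

Lemma quot_field_mapP : is_quot_field_of_quotient I quot_field_map.
Proof.
have ker a : quot_field_map a = 0 <-> I a.
  rewrite -(rmorph0 quot_field_map); apply: (iff_trans (rwP eqP)).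
  rewrite /= tofrac_eq -(Quotient.idealrBE (ideal_pred : prime_idealr A)) subr0.
  by split=> /asboolP.
split=> // x; have [n [e [he ->]]] := fraction_numden x.
exists (repr n), (repr e); rewrite /= /quotient_proj !reprK tofrac_eq0; split=> //.
Qed.

End QuotientField.

Lemma quot_field_exists (A : comUnitRingType) (I : A -> Prop) : prime_ideal I ->
  exists (F : fieldType) (phi : {rmorphism A -> F}), is_quot_field_of_quotient I phi.
Proof.
by move=> hI; exists {fraction quotient_ring hI}, (quot_field_map hI); apply: quot_field_mapP.
Qed.

Lemma field_cancellation (F : fieldType) (e : F -> F -> Prop) :
  divisibility e -> cancellation e.
Proof.
move=> he a b c hc /(dv_mulr he c^-1).
have c0 : c != 0 by apply/eqP => c0; apply: hc; rewrite c0; apply: dv_refl.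
by rewrite !mulfK.
Qed.

Lemma dv_support_congr (R : comUnitRingType) (d : R -> R -> Prop) x y x' y' :
  divisibility d -> d x y -> d 0 (x - x') -> d 0 (y - y') -> d x' y'.
Proof.
move=> hd hxy hx hy; have sup a b : d 0 b -> d a b by apply: (dv_trans hd (dvr0 hd a)).
have hx' : d x' x.
  by rewrite -(subrK x' x) addrC; apply: (dv_add hd (dv_refl hd _) (sup _ _ hx)).
have hy' : d y y' by rewrite -[y'](subKr y); apply: (dv_sub hd (dv_refl hd _) (sup _ _ hy)).
exact: (dv_trans hd hx' (dv_trans hd hxy hy')).
Qed.

Section FractionDivisibility.
Variables (R : comUnitRingType) (d : R -> R -> Prop).
Variables (F : fieldType) (phi : {rmorphism R -> F}).
Hypotheses (hd : divisibility d) (htot : total_rel d) (hcan : cancellation d).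
Hypothesis hq : is_quot_field_of_quotient (div_support d) phi.

Definition frac_dv (x y : F) : Prop :=
  exists a b c e,
    [/\ ~ d 0 b, ~ d 0 e, x = phi a / phi b, y = phi c / phi e & d (a * e) (c * b)].

Lemma phi_eq0 a : phi a = 0 <-> d 0 a. Proof. by case: hq. Qed.
Lemma phi_neq0 b : ~ d 0 b -> phi b != 0. Proof. by move=> hb; apply/eqP => /phi_eq0. Qed.

Lemma frac_rep x : exists a b, ~ d 0 b /\ x = phi a / phi b.
Proof.
case: hq => _ /(_ x) [a [b [hb hx]]]; exists a, b; split => //.
by move=> /phi_eq0 /eqP; apply/negP.
Qed.

Lemma frac_rep_eq a b a' b' : ~ d 0 b -> ~ d 0 b' -> phi a / phi b = phi a' / phi b' ->
  d 0 (a * b' - a' * b).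
Proof.
move=> hb hb' /eqP; rewrite eqr_div ?phi_neq0 // => /eqP e.
by apply/phi_eq0; rewrite rmorphB !rmorphM e subrr.
Qed.

Lemma frac_dvP x y : frac_dv x y -> forall a b c e, ~ d 0 b -> ~ d 0 e ->
  x = phi a / phi b -> y = phi c / phi e -> d (a * e) (c * b).
Proof.
move=> [a0 [b0 [c0 [e0 [hb0 he0 hx hy h]]]]] a b c e hb he hx' hy'.
have r1 := frac_rep_eq hb0 hb (etrans (esym hx) hx').
have r2 := frac_rep_eq he0 he (etrans (esym hy) hy').
apply: (hcan (not_dv_support_mul hcan hb0 he0)).
apply: (dv_support_congr hd (dv_mulr hd (b * e) h)).
- have -> : a0 * e0 * (b * e) - a * e * (b0 * e0) = (a0 * b - a * b0) * (e0 * e) by ring.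
  exact: (dv_support_mulr hd _ r1).
- have -> : c0 * b0 * (b * e) - c * b * (b0 * e0) = (c0 * e - c * e0) * (b0 * b) by ring.
  exact: (dv_support_mulr hd _ r2).
Qed.

Lemma frac_dv_intro a b c e : ~ d 0 b -> ~ d 0 e -> d (a * e) (c * b) ->
  frac_dv (phi a / phi b) (phi c / phi e).
Proof. by move=> hb he h; exists a, b, c, e; split. Qed.

Lemma frac_dvE a b : frac_dv (phi a) (phi b) <-> d a b.
Proof.
have n01 := not_dv01 hd; have phi1 c : phi c = phi c / phi 1 by rewrite rmorph1 divr1.
split=> [h | h]; first by have := frac_dvP h n01 n01 (phi1 a) (phi1 b); rewrite !mulr1.
by rewrite (phi1 a) (phi1 b); apply: (frac_dv_intro n01 n01); rewrite !mulr1.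
Qed.

Lemma frac_dv0 x : frac_dv 0 x -> x = 0.
Proof.
move=> h; have [a [b [hb hx]]] := frac_rep x.
have e0 : (0 : F) = phi 0 / phi 1 by rewrite rmorph0 mul0r.
have := frac_dvP h (not_dv01 hd) hb e0 hx; rewrite mul0r mulr1 => /phi_eq0 ha.
by rewrite hx ha mul0r.
Qed.

Lemma phi_fracM a b c e : phi b != 0 -> phi e != 0 ->
  (phi a / phi b) * (phi c / phi e) = phi (a * c) / phi (b * e).
Proof. by move=> hb he; rewrite !rmorphM invfM mulrACA. Qed.

Lemma phi_fracB a b c e : phi b != 0 -> phi e != 0 ->
  (phi a / phi b) - (phi c / phi e) = phi (a * e - c * b) / phi (b * e).
Proof. by move=> hb he; rewrite rmorphB !rmorphM; field; rewrite hb he. Qed.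

Lemma frac_dv_trans x y z : frac_dv x y -> frac_dv y z -> frac_dv x z.
Proof.
move=> h1 h2; have [a [b [hb hx]]] := frac_rep x; have [c [e [he hy]]] := frac_rep y.
have [g [k [hk hz]]] := frac_rep z.
have H1 := frac_dvP h1 hb he hx hy; have H2 := frac_dvP h2 he hk hy hz.
rewrite hx hz; apply: frac_dv_intro => //; apply: (hcan he).
have -> : a * k * e = a * e * k by ring.
have -> : g * b * e = g * e * b by ring.
apply: (dv_trans hd (dv_mulr hd k H1)).
have -> : c * b * k = c * k * b by ring.
exact: (dv_mulr hd b H2).
Qed.

Lemma frac_dv_sub x y z : frac_dv x y -> frac_dv x z -> frac_dv x (y - z).
Proof.
move=> h1 h2; have [a [b [hb hx]]] := frac_rep x; have [c [e [he hy]]] := frac_rep y.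
have [g [k [hk hz]]] := frac_rep z.
have H1 := frac_dvP h1 hb he hx hy; have H2 := frac_dvP h2 hb hk hx hz.
rewrite hx hy hz phi_fracB ?phi_neq0 //.
apply: frac_dv_intro => //; first exact: not_dv_support_mul.
have -> : a * (e * k) = a * e * k by ring.
have -> : (c * k - g * e) * b = c * b * k - g * b * e by ring.
apply: (dv_sub hd (dv_mulr hd k H1)).
have -> : a * e * k = a * k * e by ring.
exact: (dv_mulr hd e H2).
Qed.

Lemma frac_dv_mulr x y z : frac_dv x y -> frac_dv (x * z) (y * z).
Proof.
move=> h; have [a [b [hb hx]]] := frac_rep x; have [c [e [he hy]]] := frac_rep y.
have [g [k [hk hz]]] := frac_rep z.
have H := frac_dvP h hb he hx hy.
rewrite hx hy hz !phi_fracM ?phi_neq0 //; apply: frac_dv_intro; try exact: not_dv_support_mul.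
have -> : a * g * (e * k) = a * e * (g * k) by ring.
have -> : c * g * (b * k) = c * b * (g * k) by ring.
exact: (dv_mulr hd _ H).
Qed.

Lemma frac_dv_divisibility : divisibility frac_dv.
Proof.
split; [| exact: frac_dv_trans | exact: frac_dv_sub | exact: frac_dv_mulr |].
  by move=> x; have [a [b [hb ->]]] := frac_rep x; apply: frac_dv_intro => //; apply: dv_refl.
by move=> /frac_dv0 /eqP; rewrite oner_eq0.
Qed.

Lemma frac_dv_total : total_rel frac_dv.
Proof.
move=> x y; have [a [b [hb ->]]] := frac_rep x; have [c [e [he ->]]] := frac_rep y.
by case: (htot (a * e) (c * b)) => h; [left | right]; apply: frac_dv_intro.
Qed.

(* The Fermat axiom at (a, b) is the Fermat axiom at y = a / b, scaled by b^(2p+2). *)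
Lemma frac_dv_fermat (p : nat) :
  (forall a b, d (p%:R * ((a ^+ p * b - b ^+ p * a) ^+ 2 - (b ^+ p.+1) ^+ 2))
                 ((a ^+ p * b - b ^+ p * a) * b ^+ p.+1)) ->
  forall y, frac_dv (p%:R * ((y ^+ p - y) ^+ 2 - 1)) (y ^+ p - y).
Proof.
move=> h7 y; have [a [b [hb hy]]] := frac_rep y; have b0 := phi_neq0 hb.
have ha : phi a = y * phi b by rewrite hy divfK.
apply: (field_cancellation frac_dv_divisibility (c := (phi b ^+ p.+1) ^+ 2)).
  by move=> /frac_dv0 /eqP; apply/negP; rewrite !expf_neq0.
have := (frac_dvE _ _).2 (h7 a b).
rewrite !(rmorphXn, rmorphM, rmorphB, rmorph_nat) ha exprMn !exprS.
move: (y ^+ p) (phi b ^+ p) => Y B.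
by congr frac_dv; rewrite ?expr0; ring.
Qed.

Lemma frac_dv_corresponds (G : zmodType) (le : G -> G -> Prop) (v : F -> G) :
  (forall x y, x != 0 -> y != 0 -> (le (v x) (v y) <-> frac_dv x y)) ->
  corresponds d phi le v.
Proof.
move=> le_val a b; rewrite /vle; case: (eqVneq (phi b) 0) => [/[dup] b0 /phi_eq0 hb | b0].
  by split=> [_ | _]; [left | apply: (dv_trans hd (dvr0 hd a) hb)].
split=> [h | [b0' | [a0 h]]]; last by apply/frac_dvE; apply/le_val.
- right; have a0 : phi a != 0.
    by apply: contra_neq b0 => /phi_eq0 ha; apply/phi_eq0; apply: (dv_trans hd ha h).
  by split=> //; apply/le_val => //; apply/frac_dvE.
- by rewrite b0' eqxx in b0.
Qed.

Lemma quot_field_char0 : (forall n : nat, (n.+1)%:R \is a @GRing.unit R) -> [pchar F] =i pred0.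
Proof.
move=> hQ q; rewrite !inE; apply/negbTE/negP => /andP [/prime_gt0 q0 /eqP q_eq0].
have /phi_neq0 : ~ d 0 q%:R.
  move=> h; apply: (not_dv01 hd); have qu := hQ q.-1; rewrite prednK // in qu.
  by rewrite -(mulrV qu); apply: dv_support_mulr.
by rewrite rmorph_nat q_eq0 eqxx.
Qed.

End FractionDivisibility.

Section ValueGroup.
Variables (F : fieldType) (e : F -> F -> Prop).
Hypotheses (he : divisibility e) (htot : total_rel e).

(* 0 has no value; sending it to 1 makes the group operations total. *)
Definition nz (x : F) : F := if x == 0 then 1 else x.

Lemma nz_neq0 x : nz x != 0.
Proof. by rewrite /nz; case: ifPn => // _; apply: oner_neq0. Qed.
Lemma nz_id x : x != 0 -> nz x = x. Proof. by rewrite /nz => /negPf ->. Qed.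
Lemma nzM x y : nz (nz x * nz y) = nz x * nz y. Proof. by rewrite nz_id ?mulf_neq0 ?nz_neq0. Qed.
Lemma nzV x : nz (nz x)^-1 = (nz x)^-1. Proof. by rewrite nz_id ?invr_eq0 ?nz_neq0. Qed.

Definition same_value (x y : F) : bool := asbool (e (nz x) (nz y) /\ e (nz y) (nz x)).

Lemma same_valueP x y : reflect (e (nz x) (nz y) /\ e (nz y) (nz x)) (same_value x y).
Proof. exact: asboolP. Qed.

Lemma same_value_equiv : equiv_class_of same_value.
Proof.
split=> [x | x y | y x z].
- by apply/same_valueP; split; apply: dv_refl.
- by apply/same_valueP/same_valueP => -[].
- move=> /same_valueP [h1 h2] /same_valueP [h3 h4].
  by apply/same_valueP; split; [apply: (dv_trans he h1 h3) | apply: (dv_trans he h4 h2)].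
Qed.

Canonical same_value_rel := EquivRelPack same_value_equiv.

Local Open Scope quotient_scope.

Definition value_group := {eq_quot same_value}.
HB.instance Definition _ : EqQuotient F same_value value_group := EqQuotient.on value_group.
HB.instance Definition _ := Choice.on value_group.


Definition vg_val (x : F) : value_group := \pi_value_group x.
Definition vg_add := lift_op2 value_group (fun x y => nz x * nz y).
Definition vg_opp := lift_op1 value_group (fun x => (nz x)^-1).
Definition vg_le := lift_fun2 value_group (fun x y => e (nz x) (nz y)).

Lemma vg_val_eq x y : vg_val x = vg_val y <-> e (nz x) (nz y) /\ e (nz y) (nz x).
Proof. by split=> [/eqquotP/same_valueP // | /same_valueP h]; apply/eqquotP. Qed.
Lemma vg_val_nz x : vg_val (nz x) = vg_val x.
Proof. by apply/vg_val_eq; rewrite (nz_id (nz_neq0 x)); split; apply: dv_refl. Qed.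

Lemma vg_ind (P : value_group -> Prop) : (forall x, P (vg_val x)) -> forall g, P g.
Proof. exact: quotW. Qed.

Lemma vg_val_mul x x' y y' : vg_val x = vg_val x' -> vg_val y = vg_val y' ->
  vg_val (nz x * nz y) = vg_val (nz x' * nz y').
Proof.
rewrite !vg_val_eq !nzM => -[h1 h2] [h3 h4].
by split; apply: dv_mul.
Qed.

Lemma vg_val_inv x x' : vg_val x = vg_val x' -> vg_val (nz x)^-1 = vg_val (nz x')^-1.
Proof.
have dvV a b : a != 0 -> b != 0 -> e a b -> e b^-1 a^-1.
  move=> a0 b0 /(dv_mulr he (a^-1 * b^-1)).
  by rewrite mulrA mulfV // mul1r mulrCA mulfV // mulr1.
rewrite !vg_val_eq !nzV => -[h1 h2].
by split; apply: dvV; rewrite ?nz_neq0.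
Qed.

Lemma vg_addE x y : vg_add (vg_val x) (vg_val y) = vg_val (nz x * nz y).
Proof. by rewrite /vg_add; unlock; apply: vg_val_mul; apply: reprK. Qed.

Lemma vg_oppE x : vg_opp (vg_val x) = vg_val (nz x)^-1.
Proof. by rewrite /vg_opp; unlock; apply: vg_val_inv; apply: reprK. Qed.

Lemma vg_leE x y : vg_le (vg_val x) (vg_val y) <-> e (nz x) (nz y).
Proof.
rewrite /vg_le; unlock.
have [h1 h2] := vg_val_eq (repr (vg_val x)) x; have [h3 h4] := vg_val_eq (repr (vg_val y)) y.
have [hx1 hx2] := h1 (reprK _); have [hy1 hy2] := h3 (reprK _).
split=> h; [apply: (dv_trans he hx2) | apply: (dv_trans he hx1)].
- exact: (dv_trans he h hy1).
- exact: (dv_trans he h hy2).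
Qed.

Lemma vg_addA : associative vg_add.
Proof.
elim/vg_ind => x; elim/vg_ind => y; elim/vg_ind => z; rewrite !vg_addE.
by rewrite !nzM mulrA.
Qed.

Lemma vg_addC : commutative vg_add.
Proof. by elim/vg_ind => x; elim/vg_ind => y; rewrite !vg_addE mulrC. Qed.

Lemma vg_add0 : left_id (vg_val 1) vg_add.
Proof. by elim/vg_ind => x; rewrite vg_addE nz_id ?oner_neq0 // mul1r vg_val_nz. Qed.

Lemma vg_addN : left_inverse (vg_val 1) vg_opp vg_add.
Proof.
by elim/vg_ind => x; rewrite vg_oppE vg_addE nzV mulVf ?nz_neq0.
Qed.

HB.instance Definition _ := GRing.isZmodule.Build value_group vg_addA vg_addC vg_add0 vg_addN.

Lemma vg_valD x y : vg_val x + vg_val y = vg_val (nz x * nz y). Proof. exact: vg_addE. Qed.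

Lemma vg_valM x y : x != 0 -> y != 0 -> vg_val (x * y) = vg_val x + vg_val y.
Proof. by move=> x0 y0; rewrite vg_valD !nz_id. Qed.

Lemma vg_le_val x y : x != 0 -> y != 0 -> vg_le (vg_val x) (vg_val y) <-> e x y.
Proof. by move=> x0 y0; rewrite vg_leE !nz_id. Qed.

Lemma vg_ordered : ordered_abelian_group vg_le.
Proof.
split.
- by elim/vg_ind => x; apply/vg_leE; apply: dv_refl.
- by elim/vg_ind => x; elim/vg_ind => y /vg_leE h1 /vg_leE h2; apply/vg_val_eq.
- elim/vg_ind => x; elim/vg_ind => y; elim/vg_ind => z /vg_leE h1 /vg_leE h2.
  by apply/vg_leE; apply: (dv_trans he h1 h2).
- elim/vg_ind => x; elim/vg_ind => y.
  by case: (htot (nz x) (nz y)) => h; [left | right]; apply/vg_leE.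
- elim/vg_ind => x; elim/vg_ind => y; elim/vg_ind => z /vg_leE h.
  by rewrite !vg_valD; apply/vg_leE; rewrite !nzM; apply: dv_mulr.
Qed.

Lemma vg_valuation : valuation vg_le vg_val.
Proof.
split; first exact: vg_valM.
move=> x y x0 y0 xy0; rewrite !vg_le_val //.
by case: (htot x y) => h; [left | right]; apply: (dv_add he) => //; apply: dv_refl.
Qed.

End ValueGroup.

Lemma total_divisibility_valuation (F : fieldType) (e : F -> F -> Prop) :
  divisibility e -> total_rel e ->
  exists (G : zmodType) (le : G -> G -> Prop) (v : F -> G),
    [/\ ordered_abelian_group le, valuation le v
      & forall x y, x != 0 -> y != 0 -> (le (v x) (v y) <-> e x y)].
Proof.
move=> he htot; exists (value_group he), (@vg_le _ _ he), (vg_val he).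
by split; [apply: vg_ordered | apply: vg_valuation | apply: vg_le_val].
Qed.

Section FieldPValuation.
Variables (p : nat) (F : fieldType) (e : F -> F -> Prop).
Variables (G : zmodType) (le : G -> G -> Prop) (v : F -> G).
Hypotheses (pp : prime p) (hchar : [pchar F] =i pred0).
Hypotheses (he : divisibility e) (htot : total_rel e).
Hypothesis p_ndv1 : ~ e p%:R 1.
Hypothesis dv_fermat : forall y, e (p%:R * ((y ^+ p - y) ^+ 2 - 1)) (y ^+ p - y).
Hypotheses (hle : ordered_abelian_group le) (hv : valuation le v).
Hypothesis le_val : forall x y, x != 0 -> y != 0 -> (le (v x) (v y) <-> e x y).

Lemma val1 : v 1 = 0.
Proof. by case: hv => vM _; apply: (@addIr _ (v 1)); rewrite add0r -vM ?mulr1 ?oner_neq0. Qed.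

Lemma val_eq x y : x != 0 -> y != 0 -> v x = v y <-> e x y /\ e y x.
Proof.
move=> x0 y0; rewrite -!le_val //; case: hle => refl anti _ _ _.
by split=> [-> | [h1 h2]]; [split; apply: refl | apply: anti].
Qed.

Lemma val_pos x : x != 0 -> gt_rel le (v x) 0 <-> e 1 x /\ ~ e x 1.
Proof.
move=> x0; have o1 := oner_neq0 F; rewrite /gt_rel -val1 le_val // val_eq //.
split=> -[h1 h2]; split=> //; first by move=> h; apply: h2.
by move=> [h _]; apply: h2.
Qed.

Lemma p_valuation_of_divisibility : p_valuation p le v.
Proof.
have o1 := oner_neq0 F; have p0 : p%:R != 0 :> F by rewrite (pcharf0P F).1 // -lt0n prime_gt0.
have hcan := field_cancellation he.
split=> //.
- apply/val_pos => //; split; [exact: dv1_nat | exact: p_ndv1].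
- move=> x x0 [/(val_pos x0) [h1x hx1]]; rewrite /gt_rel le_val // val_eq // => -[hxp]; apply.
  by split=> //; apply: (dv_discrete he htot pp dv_fermat hcan).
- move=> x x0; rewrite -{1}val1 le_val // => h1x.
  have [n hn] := dv_residue he htot pp p_ndv1 dv_fermat h1x.
  exists n; case: (eqVneq (x - n%:R) 0) => xn0; [by left | right; split => //].
  by apply/(val_pos xn0); split=> //; apply: (dv_sub he h1x (dv1_nat he n)).
Qed.

End FieldPValuation.

Lemma additive_int (G : zmodType) (f : int -> G) :
  (forall m n, f (m + n) = f m + f n) -> forall n, f n = f 1 *~ n.
Proof.
move=> fD; have f0 : f 0 = 0 by apply: (@addrI _ (f 0)); rewrite -fD !addr0.
have fnat k : f k%:Z = f 1 *~ k.
  by elim: k => [|k IH]; [rewrite f0 | rewrite -addn1 PoszD fD IH mulrzDr].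
case=> k; first exact: fnat.
apply/eqP; rewrite NegzE mulrNz -fnat -addr_eq0 -fD.
by rewrite addNr f0.
Qed.

Lemma p_valuation_Z (p : nat) (F : fieldType) (G : zmodType) (le : G -> G -> Prop) (v : F -> G) :
  prime p -> ordered_abelian_group le -> p_valuation p le v -> value_group_is_Z le v ->
  forall x, x != 0 -> exists k : int, v x = v p%:R *~ k.
Proof.
move=> pp [refl anti _ _ _] [hchar _ vp_pos vp_min _] [f [fD fle fv fsurj]].
have f0 : f 0 = 0 by apply: (@addrI _ (f 0)); rewrite -fD !addr0.
have f_inj m n : f m = f n -> m = n.
  by move=> e; apply/eqP; rewrite eq_le; apply/andP; split; apply/fle; rewrite e; apply: refl.
have p0 : p%:R != 0 :> F by rewrite (pcharf0P F).1 // -lt0n prime_gt0.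
have [j vpj] := fv _ p0.
have j1 : j = 1.
  have j_pos : (0 < j)%R.
    move: vp_pos; rewrite vpj -f0 => -[/fle j0 jn0]; rewrite lt_def j0 andbT.
    by apply: contra_notN jn0 => /eqP ->.
  case: (lerP j 1) => [|j_gt1]; first by lia.
  have [x [x0 vx]] := fsurj 1; exfalso; apply: (vp_min x x0); rewrite vx vpj -f0.
  split; split; [apply/fle; lia | move/f_inj; lia | apply/fle; lia | move/f_inj; lia].
move=> x x0; have [k ->] := fv x x0; exists k.
by rewrite vpj j1 -(additive_int fD).
Qed.

Lemma int_pred_step (Q : int -> Prop) m N : Q m -> ~ Q N ->
  (forall j k, (j <= k)%R -> Q k -> Q j) -> exists n, Q n /\ ~ Q (n + 1).
Proof.
move=> hm hN hdown; have mN : (m < N)%R.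
  by case: (lerP N m) => // Nm; exfalso; apply: hN; apply: (hdown _ _ Nm hm).
suff step k : forall j, Q j -> ~ Q (j + k%:Z) -> exists n, Q n /\ ~ Q (n + 1).
  by apply: (step `|N - m|%N m hm); rewrite gez0_abs ?subr_ge0 ?ltW // addrCA subrr addr0.
elim: k => [|k IH] j hj hk; first by rewrite addr0 in hk.
case: (classic (Q (j + 1))) => h; last by exists j.
by apply: (IH _ h); rewrite -addrA -PoszD add1n.
Qed.

Section SpecDp.
Variables (p : nat) (A : comUnitRingType) (dv0 dv : A -> A -> Prop).
Hypotheses (pp : prime p) (hQ : forall n : nat, (n.+1)%:R \is a @GRing.unit A).
Hypotheses (harch : p_archimedean p dv0) (hS : in_SpecDp p dv0 dv).

Let hd : divisibility dv. Proof. by case: hS => [[]]. Qed.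
Let htot : total_rel dv. Proof. by case: hS. Qed.
Let hcan : cancellation dv. Proof. by case: hS. Qed.
Let hsub : rel_sub dv0 dv. Proof. by case: hS. Qed.
Let p_ndv_self a : ~ dv 0 a -> ~ dv (p%:R * a) a.
Proof. by case: hS => [[_ h _] _ _ _]; apply: h. Qed.
Let dv_fermat_ab a b : dv (p%:R * ((a ^+ p * b - b ^+ p * a) ^+ 2 - (b ^+ p.+1) ^+ 2))
  ((a ^+ p * b - b ^+ p * a) * b ^+ p.+1).
Proof. by case: hS => [[_ _ h] _ _ _]; apply: h. Qed.

Lemma p_ndv1 : ~ dv p%:R 1.
Proof. by have := p_ndv_self (not_dv01 hd); rewrite mulr1. Qed.

Lemma dv_fermat y : dv (p%:R * ((y ^+ p - y) ^+ 2 - 1)) (y ^+ p - y).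
Proof. by have := dv_fermat_ab y 1; rewrite !(expr1n, mulr1, mul1r). Qed.

Lemma support_prime : prime_ideal (div_support dv).
Proof.
split; rewrite /div_support.
- exact: dv_refl.
- by move=> a b; apply: dv_sub.
- by move=> a b; apply: dv_support_mulr.
- exact: not_dv01.
- by move=> a b; apply: dv_support_prime.
Qed.

Definition p_pow (n : int) : A := (p%:R : A) ^ n.

Lemma p_unit : (p%:R : A) \is a GRing.unit.
Proof. by rewrite -(prednK (prime_gt0 pp)); apply: hQ. Qed.

Lemma p_powD m n : p_pow (m + n) = p_pow m * p_pow n. Proof. exact: (exprzDr p_unit). Qed.
Lemma p_pow1 : p_pow 1 = p%:R. Proof. exact: expr1z. Qed.
Lemma p_powN n : p_pow n * p_pow (- n) = 1. Proof. by rewrite -p_powD subrr /p_pow expr0z. Qed.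

Lemma p_pow_nsupport n : ~ dv 0 (p_pow n).
Proof. by move=> h; apply: (not_dv01 hd); rewrite -(p_powN n); apply: dv_support_mulr. Qed.

Lemma p_pow_dv m n : dv (p_pow m) (p_pow n) <-> (m <= n)%R.
Proof.
have mono j k : (j <= k)%R -> dv (p_pow j) (p_pow k).
  rewrite -subr_ge0 -[k](subrK j) p_powD addrK -{1}[p_pow j]mul1r.
  case: (k - j) => // i _; apply: (dv_mulr hd); apply: (dv1_exp hd); apply: (dv1_nat hd).
split; last exact: mono.
move=> h; case: (lerP m n) => // nm; exfalso; apply: p_ndv1.
apply: (dv_cancell hcan (p_pow_nsupport (n := n))); rewrite mulr1 -p_pow1 -p_powD.
by apply: (dv_trans hd (mono _ _ _) h); lia.
Qed.

Definition p_divisible_infinitely (b : A) : Prop := forall n : int, dv (p_pow n) b.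

(* The enlargement of dv whose support is the ideal I(dv) + J of the
   infinitely p-divisible elements; the p-archimedean dv0 keeps J an ideal. *)
Definition dv_ext (a b : A) : Prop := dv a b \/ p_divisible_infinitely b.

Lemma dv_ext_dv a b c : dv_ext a b -> dv_ext a c -> ~ p_divisible_infinitely c -> dv a b.
Proof.
move=> [h | Jb] hac nJc //; have hac' : dv a c by case: hac.
case: (htot a b) => // hba; exfalso; apply: nJc => n.
exact: (dv_trans hd (dv_trans hd (Jb n) hba) hac').
Qed.

Lemma dv_ext_p_divisibility : p_divisibility p dv_ext.
Proof.
split; last by move=> a b; left; apply: dv_fermat_ab.
- split.
  + by move=> a; left; apply: dv_refl.
  + move=> a b c [hab | Jb] [hbc | Jc]; try by right.
    * by left; apply: (dv_trans hd hab hbc).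
    * by right => n; apply: (dv_trans hd (Jb n) hbc).
  + move=> a b c hab hac; case: (classic (p_divisible_infinitely (b - c))) => hJ; first by right.
    left; case: (classic (p_divisible_infinitely c)) => hJc.
    * have hJb : ~ p_divisible_infinitely b by move=> hJb; apply: hJ => n; apply: dv_sub.
      by apply: (dv_sub hd _ (dv_ext_dv hac hab hJb)); case: hab.
    * by apply: (dv_sub hd (dv_ext_dv hab hac hJc)); case: hac.
  + move=> a b c [h | Jb]; first by left; apply: dv_mulr.
    right => n; have [m hm] := harch c.
    by rewrite -(subrK m n) p_powD; apply: (dv_mul hd (Jb _) (hsub hm)).
  + case=> [h | J1]; first exact: (not_dv01 hd h).
    by apply: p_ndv1; rewrite -p_pow1; apply: J1.
- move=> a h0 [h | Ja]; last by apply: h0; right.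
  by apply: (p_ndv_self _ h) => h1; apply: h0; left.
Qed.

Lemma dv_ext_Spec : in_SpecDp p dv0 dv_ext.
Proof.
split; first exact: dv_ext_p_divisibility.
- by move=> a b; case: (htot a b) => h; [left | right]; left.
- move=> a b c h0 [h | Jbc]; first by left; apply: (hcan _ h) => h1; apply: h0; left.
  right => n; have [m hm] : exists m, ~ dv (p_pow m) c.
    by apply: not_all_ex_not => Jc; apply: h0; right.
  have hcm : dv c (p_pow m) by case: (htot c (p_pow m)).
  apply: (dv_cancell hcan (p_pow_nsupport (n := m))); rewrite -p_powD [_ * b]mulrC.
  exact: (dv_trans hd (Jbc _) (dv_mull hd _ hcm)).
- by move=> a b h; left; apply: hsub.
Qed.

Lemma maximal_support : maximal_in_SpecDp p dv0 dv ->
  forall b, p_divisible_infinitely b -> dv 0 b.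
Proof.
by move=> [_ hmax] b Jb; apply: (hmax dv_ext dv_ext_Spec (fun a b h => or_introl h) 0 b); right.
Qed.

Definition p_pow_assoc : Prop := forall a, ~ dv 0 a -> exists n, dv (p_pow n) a /\ dv a (p_pow n).

(* If p^n | a but not p^(n+1) | a, then y = a p^-n has v(y) in [0, v(p)),
   hence v(y) = 0 by discreteness. *)
Lemma p_pow_assoc_of_support : (forall b, p_divisible_infinitely b -> dv 0 b) -> p_pow_assoc.
Proof.
move=> hJ a ha; have [m hm] := harch a.
have [N hN] : exists N, ~ dv (p_pow N) a by apply: not_all_ex_not => Ja; apply: ha; apply: hJ.
have [n [hn hn1]] := int_pred_step (Q := fun n => dv (p_pow n) a) (hsub hm) hN
  (fun j k jk hk => dv_trans hd ((p_pow_dv j k).2 jk) hk).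
exists n; split=> //; set y := a * p_pow (- n).
have ay : a = y * p_pow n by rewrite /y -mulrA [p_pow (- n) * _]mulrC p_powN mulr1.
have h1y : dv 1 y by rewrite -(p_powN n); apply: dv_mulr.
have hpy : ~ dv p%:R y by move=> /(dv_mulr hd (p_pow n)); rewrite -ay -p_pow1 -p_powD addrC.
have hy1 : dv y 1.
  by apply: NNPP => hy1; apply: hpy; apply: (dv_discrete hd htot pp dv_fermat hcan h1y hy1).
by rewrite ay -{2}[p_pow n]mul1r; apply: dv_mulr.
Qed.

Definition value_groups_Z : Prop :=
  forall (F : fieldType) (phi : {rmorphism A -> F})
         (G : zmodType) (le : G -> G -> Prop) (v : F -> G),
    is_quot_field_of_quotient (div_support dv) phi -> ordered_abelian_group le ->
    p_valuation p le v -> corresponds dv phi le v -> value_group_is_Z le v.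

Lemma value_groups_Z_of_assoc : p_pow_assoc -> value_groups_Z.
Proof.
move=> hval F phi G le v hq [_ anti _ _ _] [_ [vM _] _ _ _] hc.
have phi0 a : ~ dv 0 a -> phi a != 0 by apply: (phi_neq0 hq).
have le_val a b : ~ dv 0 a -> ~ dv 0 b -> (le (v (phi a)) (v (phi b)) <-> dv a b).
  move=> ha hb; rewrite hc /vle; split=> [h | [/eqP | [_ h]] //].
    by right; split=> //; apply: phi0.
  by rewrite (negPf (phi0 _ hb)).
have pow0 n : phi (p_pow n) != 0 by apply: phi0; apply: p_pow_nsupport.
pose f n := v (phi (p_pow n)).
have fD m n : f (m + n) = f m + f n by rewrite /f p_powD rmorphM vM.
have vP a : ~ dv 0 a -> exists n, v (phi a) = f n.
  move=> ha; have [n [h1 h2]] := hval a ha; exists n.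
  by apply: anti; apply/le_val => //; apply: p_pow_nsupport.
exists f; split=> //.
- by move=> m n; apply: (iff_trans _ (p_pow_dv m n)); apply: le_val; apply: p_pow_nsupport.
- move=> x x0; have [a [b [b0 xE]]] := hq.2 x; rewrite xE in x0 *.
  have ha : ~ dv 0 a.
    by move=> /(phi_eq0 hq) a0; move: x0; rewrite a0 mul0r eqxx.
  have hb : ~ dv 0 b by move=> /(phi_eq0 hq) /eqP; apply/negP.
  have [m hm] := vP a ha; have [k hk] := vP b hb.
  exists (m - k); apply: (addIr (f k)); rewrite -fD subrK -hm -hk -vM ?divfK //.
- by move=> n; exists (phi (p_pow n)).
Qed.

Lemma maximal_of_assoc : p_pow_assoc -> maximal_in_SpecDp p dv0 dv.
Proof.
move=> hval; split=> // dv' [[hd' h6' _] _ hcan' _] sub a b h'.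
have p_pow_nsupport' n : ~ dv' 0 (p_pow n).
  by move=> h; apply: (not_dv01 hd'); rewrite -(p_powN n); apply: dv_support_mulr.
case: (classic (dv 0 b)) => hb; first exact: (dv_trans hd (dvr0 hd a) hb).
have [n [hn1 hn2]] := hval b hb.
case: (classic (dv 0 a)) => ha.
  exfalso; apply: (p_pow_nsupport' n).
  exact: (dv_trans hd' (sub _ _ ha) (dv_trans hd' h' (sub _ _ hn2))).
have [m [hm1 hm2]] := hval a ha.
have hmn : dv' (p_pow m) (p_pow n).
  exact: (dv_trans hd' (sub _ _ hm1) (dv_trans hd' h' (sub _ _ hn2))).
case: (lerP m n) => [mn | nm].
  exact: (dv_trans hd hm2 (dv_trans hd ((p_pow_dv m n).2 mn) hn1)).
exfalso; apply: (h6' 1 (not_dv01 hd')); rewrite mulr1.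
apply: (dv_cancell hcan' (p_pow_nsupport' n)); rewrite mulr1 -p_pow1 -p_powD.
by apply: (dv_trans hd' (sub _ _ ((p_pow_dv (n + 1) m).2 _)) hmn); lia.
Qed.

(* Apply the hypothesis to the valuation of the extension of dv to Quot(A / I(dv)). *)
Lemma assoc_of_value_groups_Z : value_groups_Z -> p_pow_assoc.
Proof.
move=> hZ a ha; have [F [phi hq]] := quot_field_exists support_prime.
have he := frac_dv_divisibility hd hcan hq; have hetot := frac_dv_total htot hq.
have [G [le [v [hle hv le_val]]]] := total_divisibility_valuation he hetot.
have phi0 b : ~ dv 0 b -> phi b != 0 by apply: (phi_neq0 hq).
have hchar := quot_field_char0 hd hq hQ.
have p_ndv1F : ~ frac_dv dv phi p%:R 1.
  by rewrite -(rmorph_nat phi p) -(rmorph1 phi) (frac_dvE hd hcan hq); apply: p_ndv1.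
have hpv := p_valuation_of_divisibility pp hchar he hetot p_ndv1F
  (frac_dv_fermat hd hcan hq dv_fermat_ab) hle hv le_val.
have hc := frac_dv_corresponds hd hcan hq le_val.
have [k vk] := p_valuation_Z pp hle hpv (hZ _ _ _ _ _ hq hle hpv hc) (phi0 _ ha).
have pow0 n : phi (p_pow n) != 0 by apply: phi0; apply: p_pow_nsupport.
have vpow : v (phi (p_pow k)) = v p%:R *~ k.
  rewrite (additive_int (f := fun n => v (phi (p_pow n)))) ?p_pow1 ?rmorph_nat //.
  by move=> m n; rewrite p_powD rmorphM; case: hv => vM _; apply: vM.
have vpa : v (phi a) = v (phi (p_pow k)) by rewrite vpow.
exists k; rewrite -!(frac_dvE hd hcan hq) -!le_val ?pow0 ?phi0 // vpa.
by case: hle => refl _ _ _ _; split; apply: refl.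
Qed.

End SpecDp.

Theorem theorem3p5 (p : nat) (A : comUnitRingType) (dv0 : A -> A -> Prop) :
  prime p ->
  (* Q is contained in A: every positive integer is invertible in A *)
  (forall n : nat, (n.+1)%:R \is a @GRing.unit A) ->
  p_divisibility p dv0 ->
  p_archimedean p dv0 ->
  forall dv : A -> A -> Prop,
    in_SpecDp p dv0 dv ->
    (maximal_in_SpecDp p dv0 dv <->
     (prime_ideal (div_support dv) /\
      forall (F : fieldType) (phi : {rmorphism A -> F})
             (G : zmodType) (le : G -> G -> Prop) (v : F -> G),
        is_quot_field_of_quotient (div_support dv) phi ->
        ordered_abelian_group le ->
        p_valuation p le v ->
        corresponds dv phi le v ->
        value_group_is_Z le v)).
Proof.
move=> pp hQ _ harch dv hS; split.
- move=> hmax; split; first exact: support_prime hS.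
  apply: (value_groups_Z_of_assoc pp hQ hS).
  exact: (p_pow_assoc_of_support pp hQ harch hS (maximal_support pp hQ harch hS hmax)).
- move=> [_ hZ]; apply: (maximal_of_assoc pp hQ hS).
  exact: (assoc_of_value_groups_Z pp hQ hS hZ).
Qed.
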